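(* Let $B$ be the regular binary rooted tree (the root has degree two and every other vertex has degree three) with simplicial metric $d_B$. Let $Y$ be a connected graph of bounded degree with simplicial metric $d_Y$. Suppose there exist a map $f:VB\to VY$ from the vertex set of $B$ to the vertex set of $Y$ and a constant $C>0$ such that for all vertices $u,v\in VB$ $$\frac1C d_B(u,v)-C\le d_Y(f(u),f(v))\le C\,d_B(u,v)+C.$$ Then $Y$ is transient (the simple random walk on $Y$ returns to its starting vertex with probability strictly less than 1).
   Context: Simplicial metric: path metric on a graph in which every edge has length one. *)

From Stdlib Require Import Reals List Classical ClassicalEpsilon.
From Coquelicot Require Import Coquelicot.
Import ListNotations.
Open Scope R_scope.

Inductive walkn {V : Type} (adj : V -> V -> Prop) : nat -> V -> V -> Prop :=
| walk_nil : forall x, walkn adj 0 x x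
| walk_cons : forall n x y z, adj x y -> walkn adj n y z -> walkn adj (S n) x z.

(* Simplicial (path) metric: the least length of a walk from u to v
   (defined to be 0 if u and v are not connected; irrelevant for connected graphs). *)
Definition gdist {V : Type} (adj : V -> V -> Prop) (u v : V) : nat :=
  match excluded_middle_informative
          (exists n, walkn adj n u v /\ forall m, walkn adj m u v -> (n <= m)%nat) with
  | left H => proj1_sig (constructive_indefinite_description _ H)
  | right _ => 0%nat
  end.

(* The regular binary rooted tree B: vertices are finite binary words,
   the root is the empty word, and s is joined to s ++ [b] (b = false, true). *)
Definition BVert := list bool.
Definition adjB (s t : BVert) : Prop :=
  (exists b, t = s ++ [b]) \/ (exists b, s = t ++ [b]).
Definition dB (s t : BVert) : nat := gdist adjB s t.

Definition adj_of {V : Type} (nbrs : V -> list V) (x y : V) : Prop := In y (nbrs x).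

Definition simple_graph {V : Type} (nbrs : V -> list V) : Prop :=
  (forall x, NoDup (nbrs x)) /\
  (forall x, ~ In x (nbrs x)) /\
  (forall x y, In y (nbrs x) -> In x (nbrs y)).

Definition connected {V : Type} (nbrs : V -> list V) : Prop :=
  forall u v, exists n, walkn (adj_of nbrs) n u v.

Definition bounded_degree {V : Type} (nbrs : V -> list V) : Prop :=
  exists D : nat, forall x, (length (nbrs x) <= D)%nat.

Definition deg {V : Type} (nbrs : V -> list V) (x : V) : R := INR (length (nbrs x)).

(* first_hit nbrs v n x = probability that the simple random walk started at x
   visits v for the first time at a time >= 1 exactly at step n. *)
Fixpoint first_hit {V : Type} (nbrs : V -> list V) (v : V) (n : nat) (x : V) : R :=
  match n with
  | O => 0
  | S m =>
      / deg nbrs x *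
      fold_right Rplus 0
        (map (fun y => if excluded_middle_informative (y = v)
                       then (match m with O => 1 | S _ => 0 end)
                       else first_hit nbrs v m y) (nbrs x))
  end.

Definition return_prob {V : Type} (nbrs : V -> list V) (v : V) : R :=
  Series (fun n => first_hit nbrs v (S n) v).

Definition transient {V : Type} (nbrs : V -> list V) : Prop :=
  forall v, return_prob nbrs v < 1.

(* Let w be the probability of reaching v within N steps. Since w = 1 at v and w is
   subharmonic elsewhere, the Green identity bounds its Dirichlet energy by 2 deg(v) times the
   probability of not returning to v within N+1 steps. Conversely w vanishes at the images of
   deep tree vertices, so it must drop from 1 to 0 along the images of tree paths. Descending
   greedily in the tree into the child whose subtree carries less energy, and using that the
   L-balls around images of tree vertices overlap boundedly often (quasi-isometry and bounded
   degree), forces the energy to be at least a positive constant independent of N. Hence the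
   return probability stays bounded away from 1. *)

From Stdlib Require Import Reals List Lia Lra Wf_nat Classical ClassicalEpsilon.
From Coquelicot Require Import Coquelicot.
Import ListNotations.
Open Scope R_scope.
Set Bullet Behavior "Strict Subproofs".

Definition sumR {A : Type} (g : A -> R) (l : list A) : R := fold_right Rplus 0 (map g l).

Definition ind (P : Prop) (r : R) : R := if excluded_middle_informative P then r else 0.

Section ListSums.
Context {A : Type}.
Implicit Types (g h : A -> R) (l : list A).

Lemma sumR_nil g : sumR g [] = 0.
Proof. reflexivity. Qed.

Lemma sumR_cons g a l : sumR g (a :: l) = g a + sumR g l.
Proof. reflexivity. Qed.

Lemma sumR_app g l1 l2 : sumR g (l1 ++ l2) = sumR g l1 + sumR g l2.
Proof. induction l1 as [|a l1 IH]; [rewrite app_nil_l, sumR_nil; ring|]. rewrite <- app_comm_cons, !sumR_cons, IH; ring. Qed.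

Lemma sumR_ext g h l : (forall a, In a l -> g a = h a) -> sumR g l = sumR h l.
Proof.
  induction l as [|a l IH]; intros H; [reflexivity|].
  rewrite !sumR_cons, H, IH; [reflexivity| |left; reflexivity]. intros; apply H; right; auto.
Qed.

Lemma sumR_le g h l : (forall a, In a l -> g a <= h a) -> sumR g l <= sumR h l.
Proof.
  induction l as [|a l IH]; intros H; [rewrite !sumR_nil; lra|].
  rewrite !sumR_cons; apply Rplus_le_compat; [apply H; left|apply IH; intros; apply H; right]; auto.
Qed.

Lemma sumR_const (c : R) l : sumR (fun _ => c) l = INR (length l) * c.
Proof. induction l as [|a l IH]; [rewrite !sumR_nil; simpl; ring|]. rewrite sumR_cons, IH, length_cons, S_INR; ring. Qed.

Lemma sumR_nonneg g l : (forall a, In a l -> 0 <= g a) -> 0 <= sumR g l.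
Proof. intros H. rewrite <- (Rmult_0_r (INR (length l))), <- sumR_const. now apply sumR_le. Qed.

Lemma sumR_nonpos g l : (forall a, In a l -> g a <= 0) -> sumR g l <= 0.
Proof. intros H. rewrite <- (Rmult_0_r (INR (length l))), <- sumR_const. now apply sumR_le. Qed.

Lemma sumR_plus g h l : sumR (fun a => g a + h a) l = sumR g l + sumR h l.
Proof. induction l as [|a l IH]; [rewrite !sumR_nil; simpl; ring|]. rewrite !sumR_cons, IH; ring. Qed.

Lemma sumR_minus g h l : sumR (fun a => g a - h a) l = sumR g l - sumR h l.
Proof. induction l as [|a l IH]; [rewrite !sumR_nil; simpl; ring|]. rewrite !sumR_cons, IH; ring. Qed.

Lemma sumR_scal (c : R) g l : sumR (fun a => c * g a) l = c * sumR g l.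
Proof. induction l as [|a l IH]; [rewrite !sumR_nil; simpl; ring|]. rewrite !sumR_cons, IH; ring. Qed.

Lemma sumR_term_le g l a : (forall b, In b l -> 0 <= g b) -> In a l -> g a <= sumR g l.
Proof.
  induction l as [|b l IH]; intros H Ha; [destruct Ha|]. rewrite sumR_cons. destruct Ha as [<-|Ha].
  - assert (0 <= sumR g l) by (apply sumR_nonneg; intros; apply H; right; auto). lra.
  - assert (0 <= g b) by (apply H; left; auto).
    assert (g a <= sumR g l) by (apply IH; auto; intros; apply H; right; auto). lra.
Qed.

Lemma sumR_le_term g l a : NoDup l -> In a l ->
  (forall b, In b l -> b <> a -> g b <= 0) -> sumR g l <= g a.
Proof.
  intros Hl; induction Hl as [|b l Hb Hl IH]; intros Ha H; [destruct Ha|].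
  rewrite sumR_cons. destruct Ha as [<-|Ha].
  - assert (sumR g l <= 0) by (apply sumR_nonpos; intros c Hc; apply H; [right|intros ->]; auto). lra.
  - assert (g b <= 0) by (apply H; [left|intros ->]; auto).
    assert (sumR g l <= g a) by (apply IH; auto; intros; apply H; [right|]; auto). lra.
Qed.

Lemma sumR_neq0 g l : sumR g l <> 0 -> exists a, In a l /\ g a <> 0.
Proof.
  induction l as [|a l IH]; intros H; [now destruct H|].
  rewrite sumR_cons in H. destruct (Req_dec (g a) 0) as [E|E].
  - destruct IH as [b [Hb Hgb]]; [lra|]. exists b; simpl; auto.
  - exists a; simpl; auto.
Qed.

Lemma sumR_ind_eq g l a : NoDup l -> sumR (fun b => ind (b = a) (g b)) l = ind (In a l) (g a).
Proof.
  intros Hl; induction Hl as [|b l Hb Hl IH]; rewrite ?sumR_cons; unfold ind in *; simpl.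
  - destruct excluded_middle_informative; tauto.
  - rewrite IH.
    destruct (excluded_middle_informative (b = a)), (excluded_middle_informative (In a l)),
      (excluded_middle_informative (b = a \/ In a l)); subst; tauto || ring.
Qed.

Lemma sumR_restrict g l (S : list A) : NoDup l -> NoDup S ->
  (forall a, In a l -> g a <> 0 -> In a S) -> sumR g l = sumR (fun a => ind (In a l) (g a)) S.
Proof.
  intros Hl HS; induction Hl as [|b l Hb Hl IH]; intros H.
  - rewrite sumR_nil, (sumR_ext _ (fun _ => 0)), sumR_const; [ring|].
    intros a _; unfold ind; destruct excluded_middle_informative; simpl in *; tauto.
  - rewrite sumR_cons, IH by (intros; apply H; simpl; auto).
    assert (Eb : g b = ind (In b S) (g b)).
    { unfold ind; destruct excluded_middle_informative; auto.
      destruct (Req_dec (g b) 0); auto. exfalso; apply n, H; simpl; auto. }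
    rewrite Eb, <- (sumR_ind_eq g S b HS), <- sumR_plus. apply sumR_ext. intros a _. unfold ind.
    destruct (excluded_middle_informative (a = b)), (excluded_middle_informative (In a l)),
      (excluded_middle_informative (In a (b :: l))) as [Hin|Hin]; simpl in *; subst;
      tauto || ring || (destruct Hin; subst; tauto).
Qed.

End ListSums.

Lemma sumR_swap {A B : Type} (g : A -> B -> R) (l1 : list A) (l2 : list B) :
  sumR (fun a => sumR (g a) l2) l1 = sumR (fun b => sumR (fun a => g a b) l1) l2.
Proof.
  induction l1 as [|a l1 IH].
  - rewrite sumR_nil, (sumR_ext _ (fun _ => 0)), sumR_const by reflexivity. ring.
  - rewrite sumR_cons, IH, <- sumR_plus. reflexivity.
Qed.

Section Walks.
Context {V : Type}.
Implicit Types (adj : V -> V -> Prop) (nb : V -> list V).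

Lemma walkn_app adj n m x y z : walkn adj n x y -> walkn adj m y z -> walkn adj (n + m) x z.
Proof. induction 1; intros; simpl; [|econstructor]; eauto. Qed.

Lemma walkn_snoc adj n x y z : walkn adj n x y -> adj y z -> walkn adj (S n) x z.
Proof.
  intros Hw Hyz. rewrite <- Nat.add_1_r. apply (walkn_app _ _ _ _ _ _ Hw).
  econstructor; eauto; constructor.
Qed.

Lemma walkn_sym adj n x y : (forall a b, adj a b -> adj b a) -> walkn adj n x y -> walkn adj n y x.
Proof. intros Hs Hw; induction Hw; [constructor|eapply walkn_snoc; eauto]. Qed.

Lemma walkn_mono adj adj' n x y : (forall a b, adj a b -> adj' a b) ->
  walkn adj n x y -> walkn adj' n x y.
Proof. intros H Hw; induction Hw; econstructor; eauto. Qed.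

Lemma gdist_minimal adj n u v : walkn adj n u v ->
  walkn adj (gdist adj u v) u v /\ forall m, walkn adj m u v -> (gdist adj u v <= m)%nat.
Proof.
  intros Hw. unfold gdist. destruct excluded_middle_informative as [Hmin|Hnomin].
  - exact (proj2_sig (constructive_indefinite_description _ Hmin)).
  - exfalso. apply Hnomin.
    destruct (dec_inh_nat_subset_has_unique_least_element (fun m => walkn adj m u v))
      as [m [Hm _]]; eauto using classic.
Qed.

Lemma gdist_le adj n u v : walkn adj n u v -> (gdist adj u v <= n)%nat.
Proof. intros H. now apply (gdist_minimal _ _ _ _ H). Qed.

Lemma gdist_walk adj n u v : walkn adj n u v -> walkn adj (gdist adj u v) u v.
Proof. intros H. apply (gdist_minimal _ _ _ _ H). Qed.

(** [ball nb x r] lists (with repetitions) the vertices at distance at most [r] from [x]. *)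
Fixpoint ball nb (x : V) (r : nat) : list V :=
  match r with
  | O => [x]
  | S r' => ball nb x r' ++ flat_map nb (ball nb x r')
  end.

Lemma ball_center nb x r : In x (ball nb x r).
Proof. induction r; simpl; [auto|apply in_or_app; auto]. Qed.

Lemma ball_mono nb x r r' y : (r <= r')%nat -> In y (ball nb x r) -> In y (ball nb x r').
Proof. induction 1; auto. intros; simpl; apply in_or_app; auto. Qed.

Lemma ball_step nb x r y z : In y (ball nb x r) -> In z (nb y) -> In z (ball nb x (S r)).
Proof. intros; simpl; apply in_or_app; right; apply in_flat_map; eauto. Qed.

Lemma walk_in_ball nb n x y : walkn (adj_of nb) n x y -> In y (ball nb x n).
Proof.
  intros Hw. enough (H : forall r a, In a (ball nb x r) -> walkn (adj_of nb) n a y ->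
                                     In y (ball nb x (r + n))) by exact (H 0%nat x (or_introl eq_refl) Hw).
  clear Hw; intros r a Ha Hw; revert r Ha. induction Hw; intros r Ha.
  - now rewrite Nat.add_0_r.
  - rewrite <- Nat.add_succ_comm. eapply IHHw, ball_step; eauto.
Qed.

Lemma ball_walk nb x r y : In y (ball nb x r) -> exists n, (n <= r)%nat /\ walkn (adj_of nb) n x y.
Proof.
  revert y; induction r as [|r IH]; intros y H; simpl in H.
  - destruct H as [<-|[]]. exists 0%nat; split; [lia|constructor].
  - apply in_app_or in H as [H|H].
    + destruct (IH y H) as [n [Hn Hw]]. exists n; split; [lia|auto].
    + apply in_flat_map in H as [z [Hz Hy]]. destruct (IH z Hz) as [n [Hn Hw]].
      exists (S n); split; [lia|]. eapply walkn_snoc; eauto.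
Qed.

Lemma ball_shift nb x y r z : In y (nb x) -> In z (ball nb y r) -> In z (ball nb x (S r)).
Proof.
  intros Hxy Hz. destruct (ball_walk _ _ _ _ Hz) as [n [Hn Hw]].
  apply (ball_mono _ _ (S n)); [lia|]. apply walk_in_ball. econstructor; eauto.
Qed.

Lemma ball_length nb (D : nat) x r :
  (forall a, (length (nb a) <= D)%nat) -> (length (ball nb x r) <= (D + 1) ^ r)%nat.
Proof.
  intros HD. induction r as [|r IH]; [simpl; lia|].
  cbn [ball]. rewrite length_app, Nat.pow_succ_r'.
  enough (length (flat_map nb (ball nb x r)) <= D * length (ball nb x r))%nat by nia.
  clear IH. induction (ball nb x r) as [|a l IHl]; [simpl; lia|].
  cbn [flat_map]. rewrite length_app. cbn [length]. specialize (HD a). nia.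
Qed.

End Walks.

Definition nbrsB (s : BVert) : list BVert :=
  (s ++ [false]) :: (s ++ [true]) :: match s with [] => [] | _ :: _ => [removelast s] end.

Lemma nbrsB_length s : (length (nbrsB s) <= 3)%nat.
Proof. destruct s; simpl; lia. Qed.

Lemma adjB_nbrsB s t : adjB s t -> adj_of nbrsB s t.
Proof.
  intros [[b ->]|[b ->]]; unfold adj_of, nbrsB.
  - destruct b; simpl; auto.
  - right; right. destruct t as [|a t]; left; [reflexivity|].
    exact (removelast_last (a :: t) b).
Qed.

Lemma adjB_sym s t : adjB s t -> adjB t s.
Proof. unfold adjB; tauto. Qed.

Lemma walkB_root s : walkn adjB (length s) [] s.
Proof.
  induction s as [|b s IH] using rev_ind; [constructor|].
  rewrite length_app, Nat.add_1_r. eapply walkn_snoc; eauto. left; eauto.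
Qed.

Lemma dB_walk s t : walkn adjB (dB s t) s t.
Proof.
  apply (gdist_walk _ (length s + length t)%nat).
  apply walkn_app with []; [apply walkn_sym; [apply adjB_sym|]|]; apply walkB_root.
Qed.

Lemma dB_child t b : (dB t (t ++ [b]) <= 1)%nat.
Proof. apply (gdist_le _ 1%nat). econstructor; [left; eauto|constructor]. Qed.

Lemma length_le_dB_root s : (length s <= dB [] s)%nat.
Proof.
  enough (H : forall n a b, walkn adjB n a b -> (length b <= length a + n)%nat)
    by exact (H _ _ _ (dB_walk [] s)).
  induction 1 as [|n x y z [[c ->]|[c ->]] _ IH]; rewrite ?length_app in *; simpl in *; lia.
Qed.

Lemma in_ballB_dB s t : In t (ball nbrsB s (dB s t)).
Proof. apply walk_in_ball, (walkn_mono adjB); [exact adjB_nbrsB|apply dB_walk]. Qed.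

Fixpoint subtree (t : BVert) (k : nat) : list BVert :=
  match k with
  | O => []
  | S k' => t :: subtree (t ++ [false]) k' ++ subtree (t ++ [true]) k'
  end.

Lemma in_subtree k t s : In s (subtree t k) -> exists r, s = t ++ r /\ (length r < k)%nat.
Proof.
  revert t; induction k as [|k IH]; intros t H; [destruct H|].
  destruct H as [<-|H]; [exists []; rewrite app_nil_r; split; [reflexivity|simpl; lia]|].
  apply in_app_or in H as [H|H]; apply IH in H as [r [-> Hr]];
    [exists (false :: r)|exists (true :: r)]; rewrite <- app_assoc; simpl; split; auto; lia.
Qed.

Lemma subtree_NoDup k t : NoDup (subtree t k).
Proof.
  revert t; induction k as [|k IH]; intros t; constructor.
  - intros H. apply in_app_or in H as [H|H]; apply in_subtree in H as [r [Hr _]];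
      apply (f_equal (@length bool)) in Hr; rewrite !length_app in Hr; simpl in Hr; lia.
  - apply NoDup_app; auto. intros s Hs Hs'.
    apply in_subtree in Hs as [r1 [-> _]], Hs' as [r2 [E _]].
    rewrite <- !app_assoc in E. apply app_inv_head in E. discriminate.
Qed.

Section HittingProbabilities.
Context {V : Type} (nbrs : V -> list V) (v : V).

(** [hit_within N x]: probability that the walk from [x] visits [v] at some time in [1..N];
    [reach_within N y] also counts time [0]. *)
Fixpoint hit_within (N : nat) (x : V) : R :=
  match N with O => 0 | S N' => hit_within N' x + first_hit nbrs v N x end.

Definition reach_within (N : nat) (y : V) : R :=
  if excluded_middle_informative (y = v) then 1 else hit_within N y.

Lemma inv_deg_nonneg x : 0 <= / deg nbrs x.
Proof.
  destruct (pos_INR (length (nbrs x))) as [Hpos|Hzero]; unfold deg.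
  - now apply Rlt_le, Rinv_pos.
  - rewrite <- Hzero, Rinv_0; lra.
Qed.

Lemma first_hit_nonneg n x : 0 <= first_hit nbrs v n x.
Proof.
  revert x; induction n as [|n IH]; intros x; simpl; [lra|].
  apply Rmult_le_pos; [apply inv_deg_nonneg|]. apply sumR_nonneg.
  intros y _. destruct excluded_middle_informative; [destruct n|]; auto; lra.
Qed.

Lemma hit_within_nonneg N x : 0 <= hit_within N x.
Proof. induction N; cbn [hit_within]; [lra|]. pose proof (first_hit_nonneg (S N) x); lra. Qed.

Lemma hit_within_le_succ N x : hit_within N x <= hit_within (S N) x.
Proof. cbn [hit_within]. pose proof (first_hit_nonneg (S N) x); lra. Qed.

Lemma reach_within_eq N : reach_within N v = 1.
Proof. unfold reach_within; destruct excluded_middle_informative; tauto. Qed.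

Lemma reach_within_neq N y : y <> v -> reach_within N y = hit_within N y.
Proof. unfold reach_within; destruct excluded_middle_informative; tauto. Qed.

Lemma hit_within_succ N x : hit_within (S N) x = / deg nbrs x * sumR (reach_within N) (nbrs x).
Proof.
  induction N as [|N IH].
  - cbn [hit_within]. apply Rplus_0_l.
  - change (hit_within (S (S N)) x) with (hit_within (S N) x + first_hit nbrs v (S (S N)) x).
    rewrite IH. cbn [first_hit].
    change (fold_right Rplus 0 (map ?g (nbrs x))) with (sumR g (nbrs x)).
    rewrite <- Rmult_plus_distr_l, <- sumR_plus. f_equal. apply sumR_ext. intros y _.
    unfold reach_within. destruct excluded_middle_informative; simpl; ring.
Qed.

Lemma sumR_reach_within_nbrs N x : sumR (reach_within N) (nbrs x) = deg nbrs x * hit_within (S N) x.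
Proof.
  rewrite hit_within_succ. destruct (Req_dec (deg nbrs x) 0) as [Hx|Hx]; [|field; exact Hx].
  unfold deg in *. destruct (nbrs x) as [|y l]; [rewrite !sumR_nil; ring|].
  rewrite length_cons, S_INR in Hx. pose proof (pos_INR (length l)). lra.
Qed.

Lemma hit_within_subharmonic N x : deg nbrs x * hit_within N x <= sumR (reach_within N) (nbrs x).
Proof.
  rewrite sumR_reach_within_nbrs. apply Rmult_le_compat_l; [apply pos_INR|apply hit_within_le_succ].
Qed.

Lemma first_hit_walk n x : first_hit nbrs v n x <> 0 -> walkn (adj_of nbrs) n x v.
Proof.
  revert x; induction n as [|n IH]; intros x H; simpl in H; [lra|].
  destruct (sumR_neq0 _ _ (fun E => H ltac:(unfold sumR in E; rewrite E; ring))) as [y [Hy Hfy]].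
  destruct excluded_middle_informative as [->|Hyv].
  - destruct n; [|lra]. econstructor; [exact Hy|constructor].
  - econstructor; eauto.
Qed.

Lemma reach_within_walk N y : reach_within N y <> 0 -> exists n, (n <= N)%nat /\ walkn (adj_of nbrs) n y v.
Proof.
  unfold reach_within. destruct excluded_middle_informative as [->|_].
  - intros _. exists 0%nat; split; [lia|constructor].
  - induction N as [|N IH]; cbn [hit_within]; intros H; [lra|].
    destruct (Req_dec (first_hit nbrs v (S N) y) 0) as [E|E].
    + rewrite E, Rplus_0_r in H. destruct (IH H) as [n [Hn Hw]]. exists n; split; [lia|auto].
    + exists (S N); split; [lia|]. now apply first_hit_walk.
Qed.

Lemma sum_n_first_hit N : sum_n (fun n => first_hit nbrs v (S n) v) N = hit_within (S N) v.
Proof.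
  induction N as [|N IH]; [rewrite sum_O; simpl; ring|].
  rewrite sum_Sn, IH. reflexivity.
Qed.

Lemma return_prob_lt_1 e P : 0 < e -> 0 <= P -> (forall N, e <= P * (1 - hit_within (S N) v)) ->
  return_prob nbrs v < 1.
Proof.
  intros He HP0 HP.
  assert (HPpos : 0 < P).
  { destruct HP0 as [|<-]; [assumption|]. specialize (HP 0%nat). lra. }
  set (c := 1 - e / P).
  assert (Hc : forall N, sum_n (fun n => first_hit nbrs v (S n) v) N <= c).
  { intros N. rewrite sum_n_first_hit. specialize (HP N). unfold c.
    enough (e / P <= 1 - hit_within (S N) v) by lra.
    apply Rmult_le_reg_l with P; [exact HPpos|]. field_simplify; lra. }
  assert (Hlim : Rbar_le (Lim_seq (sum_n (fun n => first_hit nbrs v (S n) v))) c).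
  { rewrite <- (Lim_seq_const c). apply Lim_seq_le_loc. exists 0%nat. intros; apply Hc. }
  assert (0 < e / P) by (apply Rdiv_lt_0_compat; assumption).
  assert (0 <= c) by (pose proof (Hc 0%nat); rewrite sum_O in *; pose proof (first_hit_nonneg 1 v); lra).
  unfold return_prob, Series.
  destruct (Lim_seq _); simpl in *; unfold c in *; lra.
Qed.

End HittingProbabilities.

Lemma amgm_le d t : 0 < t -> d <= (t + d ^ 2 / t) / 2.
Proof.
  intros Ht. replace ((t + d ^ 2 / t) / 2) with (d + (t - d) ^ 2 / (2 * t)) by (field; lra).
  enough (0 <= (t - d) ^ 2 / (2 * t)) by lra. apply Rdiv_le_0_compat; [apply pow2_ge_0|lra].
Qed.

Lemma half_add_div_le t a b : 0 < t -> a <= b -> (t + a / t) / 2 <= (t + b / t) / 2.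
Proof.
  intros Ht Hab. apply Rmult_le_compat_r; [lra|].
  apply Rplus_le_compat_l, Rmult_le_compat_r; [apply Rlt_le, Rinv_pos|]; lra.
Qed.

Lemma simple_graph_sym {V : Type} (nbrs : V -> list V) :
  simple_graph nbrs -> forall x y, adj_of nbrs x y -> adj_of nbrs y x.
Proof. intros H; apply H. Qed.

Section DirichletEnergy.
Context {V : Type} (nbrs : V -> list V) (w : V -> R).

Definition local_energy (x : V) : R := sumR (fun y => (w x - w y) ^ 2) (nbrs x).

Definition energy (SS : list V) : R := sumR local_energy SS.

Lemma local_energy_nonneg x : 0 <= local_energy x.
Proof. apply sumR_nonneg; intros; apply pow2_ge_0. Qed.

Lemma drop_le_local_energy x y t : 0 < t -> In y (nbrs x) -> w x - w y <= (t + local_energy x / t) / 2.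
Proof.
  intros Ht Hy. eapply Rle_trans; [exact (amgm_le _ t Ht)|].
  apply half_add_div_le; [exact Ht|].
  apply (sumR_term_le (fun y => (w x - w y) ^ 2)); auto. intros; apply pow2_ge_0.
Qed.

Lemma drop_le_walk n a y H t : 0 < t -> walkn (adj_of nbrs) n a y ->
  (forall b, In b (ball nbrs a n) -> local_energy b <= H) -> w a - w y <= INR n * ((t + H / t) / 2).
Proof.
  intros Ht Hw; induction Hw as [|n a b c Hab Hw IH]; intros HH; [simpl; lra|].
  assert (Hstep : w a - w b <= (t + H / t) / 2).
  { eapply Rle_trans; [exact (drop_le_local_energy _ _ _ Ht Hab)|].
    apply half_add_div_le; [exact Ht|]. apply HH, ball_center. }
  assert (w b - w c <= INR n * ((t + H / t) / 2)) by (apply IH; eauto using ball_shift).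
  rewrite S_INR. lra.
Qed.

Lemma local_energy_le_energy SS x : (forall y, ~ In y SS -> local_energy y = 0) ->
  local_energy x <= energy SS.
Proof.
  intros Hout. destruct (classic (In x SS)) as [Hx|Hx].
  - apply sumR_term_le; auto using local_energy_nonneg.
  - rewrite Hout by exact Hx. apply sumR_nonneg; auto using local_energy_nonneg.
Qed.

Section FiniteSupport.
Hypothesis Hsimple : simple_graph nbrs.
Variable SS : list V.
Hypothesis HSS : NoDup SS.
Hypothesis Hsupp : forall x, w x <> 0 -> In x SS /\ forall y, In y (nbrs x) -> In y SS.

Lemma local_energy_out x : ~ In x SS -> local_energy x = 0.
Proof.
  intros Hx. unfold local_energy. rewrite (sumR_ext _ (fun _ => 0)), sumR_const; [ring|].
  intros y Hy. replace (w x) with 0; [replace (w y) with 0; [ring|]|].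
  - destruct (Req_dec (w y) 0); auto. exfalso; apply Hx, (Hsupp y); auto. now apply simple_graph_sym.
  - destruct (Req_dec (w x) 0); auto. exfalso; apply Hx, Hsupp; auto.
Qed.

(** Summation by parts: each edge is counted from both ends. *)
Lemma energy_green : energy SS = 2 * sumR (fun x => w x * (deg nbrs x * w x - sumR w (nbrs x))) SS.
Proof.
  assert (Hswap : sumR (fun x => sumR (fun y => w y * (w y - w x)) (nbrs x)) SS =
                  sumR (fun x => sumR (fun y => w x * (w x - w y)) (nbrs x)) SS).
  { set (phi x y := ind (In y (nbrs x)) (w y * (w y - w x))).
    assert (Hres : forall x, In x SS -> sumR (fun y => w y * (w y - w x)) (nbrs x) = sumR (phi x) SS).
    { intros x Hx. apply sumR_restrict; [apply Hsimple|exact HSS|].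
      intros y _ Hy. apply Hsupp. intros E; apply Hy; rewrite E; ring. }
    rewrite (sumR_ext _ _ _ Hres), sumR_swap. apply sumR_ext. intros y Hy.
    symmetry. rewrite sumR_restrict with (S := SS); [|apply Hsimple|exact HSS|].
    - apply sumR_ext. intros x _. unfold phi, ind.
      destruct (excluded_middle_informative (In x (nbrs y))) as [Hxy|Hxy],
        (excluded_middle_informative (In y (nbrs x))) as [Hyx|Hyx]; try ring;
        exfalso; [apply Hyx|apply Hxy]; now apply (simple_graph_sym _ Hsimple).
    - intros x Hx E. refine (proj2 (Hsupp y _) x Hx). intros E'; apply E; rewrite E'; ring. }
  unfold energy, local_energy. rewrite <- sumR_scal.
  transitivity (sumR (fun x => sumR (fun y => w x * (w x - w y)) (nbrs x)) SS +
                sumR (fun x => sumR (fun y => w y * (w y - w x)) (nbrs x)) SS).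
  - rewrite <- sumR_plus. apply sumR_ext. intros x _. rewrite <- sumR_plus. apply sumR_ext. intros; ring.
  - rewrite Hswap, <- sumR_plus. apply sumR_ext. intros x _.
    rewrite sumR_scal, sumR_minus, sumR_const. unfold deg. ring.
Qed.

End FiniteSupport.
End DirichletEnergy.

Section EscapeEnergy.
Context {V : Type} (nbrs : V -> list V) (Hsimple : simple_graph nbrs) (v : V) (N : nat).

Lemma reach_within_in_ball y : reach_within nbrs v N y <> 0 -> In y (ball nbrs v N).
Proof.
  intros Hy. destruct (reach_within_walk _ _ _ _ Hy) as [n [Hn Hw]].
  apply (ball_mono _ _ n); [exact Hn|]. apply walk_in_ball, walkn_sym; [|exact Hw].
  exact (simple_graph_sym _ Hsimple).
Qed.

(** In the Green identity only [v] contributes positively: off [v], [reach_within] is subharmonic. *)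
Lemma energy_reach_within_le SS : NoDup SS -> (forall x, In x (ball nbrs v (S N)) -> In x SS) ->
  energy nbrs (reach_within nbrs v N) SS <= 2 * deg nbrs v * (1 - hit_within nbrs v (S N) v).
Proof.
  intros HSS Hball. set (w := reach_within nbrs v N).
  rewrite (energy_green _ _ Hsimple _ HSS).
  2: { intros x Hx. apply reach_within_in_ball in Hx.
       split; [|intros y Hy]; apply Hball; [apply (ball_mono _ _ N)|eapply ball_step]; eauto. }
  rewrite Rmult_assoc. apply Rmult_le_compat_l; [lra|].
  eapply Rle_trans; [apply (sumR_le_term _ _ v HSS)|].
  - apply Hball, ball_center.
  - intros x _ Hxv. unfold w. rewrite reach_within_neq by exact Hxv.
    pose proof (hit_within_nonneg nbrs v N x). pose proof (hit_within_subharmonic nbrs v N x). nra.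
  - unfold w. rewrite reach_within_eq, sumR_reach_within_nbrs. lra.
Qed.

End EscapeEnergy.

Definition mult {B : Type} (z : B) (l : list B) : R := sumR (fun x => ind (z = x) 1) l.

Lemma mult_le {B : Type} (z : B) l : mult z l <= ind (In z l) (INR (length l)).
Proof.
  unfold ind. destruct excluded_middle_informative as [Hz|Hz].
  - rewrite <- (Rmult_1_r (INR _)), <- sumR_const. apply sumR_le.
    intros; unfold ind; destruct excluded_middle_informative; lra.
  - rewrite <- (Rmult_0_r (INR (length l))), <- sumR_const. apply sumR_le.
    intros x Hx; unfold ind; destruct excluded_middle_informative; subst; tauto || lra.
Qed.

Lemma sumR_mult {B : Type} (SS l : list B) (g : B -> R) : NoDup SS ->
  (forall x, ~ In x SS -> g x = 0) -> sumR g l = sumR (fun z => g z * mult z l) SS.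
Proof.
  intros HSS Hg. transitivity (sumR (fun x => sumR (fun z => ind (z = x) (g z)) SS) l).
  - apply sumR_ext. intros x _. rewrite sumR_ind_eq by exact HSS. unfold ind.
    destruct excluded_middle_informative; auto.
  - rewrite sumR_swap. apply sumR_ext. intros z _. unfold mult. rewrite <- sumR_scal.
    apply sumR_ext. intros x _. unfold ind. destruct excluded_middle_informative; ring.
Qed.

Lemma sumR_double_count {A B : Type} (T : list A) (lists : A -> list B) (SS : list B) (g : B -> R) M :
  NoDup SS -> (forall x, ~ In x SS -> g x = 0) -> (forall x, 0 <= g x) ->
  (forall z, sumR (fun s => mult z (lists s)) T <= M) ->
  sumR (fun s => sumR g (lists s)) T <= M * sumR g SS.
Proof.
  intros HSS Hg Hpos HM.
  rewrite (sumR_ext _ (fun s => sumR (fun z => g z * mult z (lists s)) SS)) by (intros; now apply sumR_mult).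
  rewrite sumR_swap, <- sumR_scal. apply sumR_le. intros z _.
  rewrite sumR_scal, Rmult_comm. apply Rmult_le_compat_r; auto.
Qed.

Lemma sumR_ind_le_length {A : Type} (P : A -> Prop) (T l0 : list A) c : NoDup T -> 0 <= c ->
  (forall s, In s T -> P s -> In s l0) -> sumR (fun s => ind (P s) c) T <= INR (length l0) * c.
Proof.
  intros HT Hc Hl0. set (S := nodup (fun x y => excluded_middle_informative (x = y)) l0).
  rewrite (sumR_restrict _ _ S HT (NoDup_nodup _ _)).
  - apply Rle_trans with (INR (length S) * c).
    + rewrite <- sumR_const. apply sumR_le. intros s _.
      unfold ind; repeat destruct excluded_middle_informative; lra.
    + apply Rmult_le_compat_r, le_INR, NoDup_incl_length; [exact Hc|apply NoDup_nodup|].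
      intros s; apply nodup_In.
  - intros s Hs Hnz. apply nodup_In, Hl0; auto.
    unfold ind in Hnz; destruct excluded_middle_informative; tauto.
Qed.

Section QuasiIsometricTree.
Context {V : Type} (nbrs : V -> list V) (Hsimple : simple_graph nbrs) (Hconn : connected nbrs)
  (f : BVert -> V) (C : R) (HC : 0 < C)
  (Hqi : forall u v : BVert,
      / C * INR (dB u v) - C <= INR (gdist (adj_of nbrs) (f u) (f v)) /\
      INR (gdist (adj_of nbrs) (f u) (f v)) <= C * INR (dB u v) + C)
  (D : nat) (HD : forall x, (length (nbrs x) <= D)%nat)
  (L : nat) (HL : 2 * C <= INR L) (R0 : nat) (HR0 : C * (2 * INR L + C) <= INR R0).

Local Notation dY := (gdist (adj_of nbrs)).

Lemma dY_walk x y : walkn (adj_of nbrs) (dY x y) x y.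
Proof. destruct (Hconn x y) as [n Hn]. exact (gdist_walk _ _ _ _ Hn). Qed.

Lemma dB_le_dY u s : INR (dB u s) <= C * (INR (dY (f u) (f s)) + C).
Proof.
  destruct (Hqi u s) as [Hlow _].
  rewrite <- (Rmult_1_l (INR (dB u s))), <- (Rinv_r C), Rmult_assoc by lra.
  apply Rmult_le_compat_l; lra.
Qed.

Lemma dY_child_le t b : (dY (f t) (f (t ++ [b])) <= L)%nat.
Proof.
  apply INR_le. destruct (Hqi t (t ++ [b])) as [_ Hup].
  pose proof (le_INR _ _ (dB_child t b)) as H1. simpl in H1. nra.
Qed.

Lemma ball_overlap_close t s z :
  In z (ball nbrs (f t) L) -> In z (ball nbrs (f s) L) -> In s (ball nbrsB t R0).
Proof.
  intros Ht Hs. destruct (ball_walk _ _ _ _ Ht) as [n1 [Hn1 W1]], (ball_walk _ _ _ _ Hs) as [n2 [Hn2 W2]].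
  assert (Hts : (dY (f t) (f s) <= n1 + n2)%nat).
  { apply gdist_le, (walkn_app _ _ _ _ _ _ W1), walkn_sym; [|exact W2].
    exact (simple_graph_sym _ Hsimple). }
  apply (ball_mono _ _ (dB t s)); [|apply in_ballB_dB].
  apply INR_le. apply le_INR in Hts, Hn1, Hn2. rewrite plus_INR in Hts.
  pose proof (dB_le_dY t s). nra.
Qed.

Definition overlap : R := INR ((D + 1) ^ L) * INR (4 ^ R0).

Lemma overlap_nonneg : 0 <= overlap.
Proof. apply Rmult_le_pos; apply pos_INR. Qed.

Definition energy_const (x : V) : R :=
  2 * INR (dY x (f [])) * (INR (dY x (f [])) + 1) + 8 * (INR L + 1) * INR L * overlap.

Lemma energy_const_nonneg x : 0 <= energy_const x.
Proof.
  pose proof (pos_INR (dY x (f []))). pose proof (pos_INR L).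
  unfold energy_const. apply Rplus_le_le_0_compat;
    repeat apply Rmult_le_pos; auto using pos_INR; lra.
Qed.

Lemma mult_balls_le z T : NoDup T -> sumR (fun s => mult z (ball nbrs (f s) L)) T <= overlap.
Proof.
  intros HT. eapply Rle_trans.
  { apply (sumR_le _ (fun s => ind (In z (ball nbrs (f s) L)) (INR ((D + 1) ^ L)))).
    intros s _. eapply Rle_trans; [apply mult_le|]. unfold ind.
    destruct excluded_middle_informative; [|lra]. apply le_INR, ball_length, HD. }
  destruct (classic (exists t, In z (ball nbrs (f t) L))) as [[t Ht]|Hnone].
  - eapply Rle_trans; [apply (sumR_ind_le_length _ _ (ball nbrsB t R0)); auto using pos_INR|].
    + intros s _ Hs. exact (ball_overlap_close _ _ _ Ht Hs).
    + unfold overlap. rewrite Rmult_comm. apply Rmult_le_compat_l; [apply pos_INR|].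
      apply le_INR, (ball_length nbrsB 3), nbrsB_length.
  - eapply Rle_trans; [apply (sumR_ind_le_length _ _ []); auto using pos_INR|].
    + intros s _ Hs. exfalso; eauto.
    + simpl. rewrite Rmult_0_l. apply overlap_nonneg.
Qed.

Section TestFunction.
Variables (w : V -> R) (SS : list V).
Hypothesis HSS : NoDup SS.
Hypothesis Hout : forall x, ~ In x SS -> local_energy nbrs w x = 0.

Local Notation E := (energy nbrs w SS).

Definition cost (s : BVert) : R := INR L * sumR (local_energy nbrs w) (ball nbrs (f s) L).

Lemma cost_nonneg s : 0 <= cost s.
Proof. apply Rmult_le_pos; [apply pos_INR|]. apply sumR_nonneg; auto using local_energy_nonneg. Qed.

Lemma drop_child t b tau : 0 < tau -> w (f t) - w (f (t ++ [b])) <= (tau * INR L + cost t / tau) / 2.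
Proof.
  intros Ht. set (H := sumR (local_energy nbrs w) (ball nbrs (f t) L)).
  pose proof (dY_child_le t b) as Hn.
  eapply Rle_trans; [apply (drop_le_walk nbrs w _ _ _ H tau Ht (dY_walk _ _))|].
  - intros a Ha. apply sumR_term_le; auto using local_energy_nonneg. eapply ball_mono; eauto.
  - assert (0 <= H) by (apply sumR_nonneg; auto using local_energy_nonneg).
    assert (0 <= H / tau) by (apply Rdiv_le_0_compat; lra).
    apply le_INR in Hn. unfold cost. fold H.
    replace ((tau * INR L + INR L * H / tau) / 2) with (INR L * ((tau + H / tau) / 2)) by (field; lra).
    apply Rmult_le_compat_r; lra.
Qed.

(** Descend greedily into the child subtree of smaller cost, shrinking the scale [tau] by [3/4]
    at each level: the geometric series of scales stays below [2 tau], and the [4/3] growth of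
    the cost term is absorbed by the halving of the cost in the cheaper child. *)
Lemma drop_subtree k : forall t tau, 0 < tau ->
  (forall s, length s = (length t + k)%nat -> w (f s) = 0) ->
  w (f t) <= 2 * tau * INR L + sumR cost (subtree t k) / tau.
Proof.
  induction k as [|k IH]; intros t tau Ht Hleaf.
  - rewrite Hleaf by lia. cbn [subtree]. rewrite sumR_nil. pose proof (pos_INR L).
    replace (0 / tau) with 0 by (field; lra). nra.
  - set (c b := sumR cost (subtree (t ++ [b]) k)).
    assert (Hsplit : sumR cost (subtree t (S k)) = cost t + c false + c true).
    { cbn [subtree]. rewrite sumR_cons, sumR_app. unfold c; ring. }
    assert (Hc : forall b, 0 <= c b) by (intros; apply sumR_nonneg; auto using cost_nonneg).
    assert (Hb : exists b, c b <= (c false + c true) / 2)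
      by (destruct (Rle_dec (c false) (c true)); [exists false|exists true]; lra).
    destruct Hb as [b Hb].
    assert (IHb : w (f (t ++ [b])) <= 2 * (3 * tau / 4) * INR L + c b / (3 * tau / 4)).
    { apply IH; [lra|]. intros s Hs. apply Hleaf. rewrite Hs, length_app; simpl; lia. }
    pose proof (drop_child t b tau Ht) as Hdrop. pose proof (cost_nonneg t).
    rewrite Hsplit.
    assert (Hcost : cost t / (2 * tau) + c b / (3 * tau / 4) <= (cost t + c false + c true) / tau).
    { replace (cost t / (2 * tau) + c b / (3 * tau / 4)) with ((cost t / 2 + 4 / 3 * c b) / tau)
        by (field; lra).
      pose proof (Hc false); pose proof (Hc true).
      apply Rmult_le_compat_r; [left; apply Rinv_pos; lra|lra]. }
    replace ((tau * INR L + cost t / tau) / 2) with (tau * INR L / 2 + cost t / (2 * tau)) in Hdrop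
      by (field; lra).
    lra.
Qed.

Lemma cost_subtree_le K : sumR cost (subtree [] K) <= INR L * overlap * E.
Proof.
  unfold cost. rewrite sumR_scal, Rmult_assoc. apply Rmult_le_compat_l; [apply pos_INR|].
  apply sumR_double_count; auto using local_energy_nonneg.
  intros z. apply mult_balls_le, subtree_NoDup.
Qed.

(** The constants [1/8] and [1/4] come from the scales [tau = 1/(4(d+1))] on a geodesic from
    [x] to [f []] and [tau = 1/(8(L+1))] in the greedy descent. *)
Lemma value_le_energy x K : (forall s, length s = K -> w (f s) = 0) ->
  w x <= 3 / 8 + energy_const x * E.
Proof.
  intros Hleaf. set (d := INR (dY x (f []))).
  assert (Hd : 0 <= d) by apply pos_INR. pose proof (pos_INR L). pose proof overlap_nonneg.
  assert (HE : 0 <= E) by (apply sumR_nonneg; auto using local_energy_nonneg).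
  assert (Hpath : w x - w (f []) <= d / (8 * (d + 1)) + 2 * d * (d + 1) * E).
  { set (t0 := / (4 * (d + 1))). assert (0 < t0) by (apply Rinv_pos; lra).
    eapply Rle_trans; [apply (drop_le_walk nbrs w _ _ _ E t0 ltac:(assumption) (dY_walk x (f [])))|].
    - intros; now apply local_energy_le_energy.
    - right. unfold t0, d. field. unfold d in Hd. lra. }
  assert (Htree : w (f []) <= INR L / (4 * (INR L + 1)) + 8 * (INR L + 1) * (INR L * overlap * E)).
  { set (t1 := / (8 * (INR L + 1))). assert (0 < t1) by (apply Rinv_pos; lra).
    eapply Rle_trans; [apply (drop_subtree K [] t1); auto|].
    replace (sumR cost (subtree [] K) / t1) with (8 * (INR L + 1) * sumR cost (subtree [] K))
      by (unfold t1; field; lra).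
    replace (2 * t1 * INR L) with (INR L / (4 * (INR L + 1))) by (unfold t1; field; lra).
    apply Rplus_le_compat_l, Rmult_le_compat_l; [lra|apply cost_subtree_le]. }
  assert (d / (8 * (d + 1)) <= 1 / 8)
    by (apply Rmult_le_reg_r with (8 * (d + 1)); [lra|field_simplify; lra]).
  assert (INR L / (4 * (INR L + 1)) <= 1 / 4)
    by (apply Rmult_le_reg_r with (4 * (INR L + 1)); [lra|field_simplify; lra]).
  unfold energy_const. fold d. nra.
Qed.

End TestFunction.

Lemma reach_within_far_leaf v N s :
  C * (INR (dY v (f [])) + INR N + C) < INR (length s) -> reach_within nbrs v N (f s) = 0.
Proof.
  intros Hs. destruct (Req_dec (reach_within nbrs v N (f s)) 0) as [|Hnz]; [assumption|exfalso].
  destruct (ball_walk _ _ _ _ (reach_within_in_ball _ Hsimple _ _ _ Hnz)) as [n [Hn Hw]].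
  assert (Hfs : (dY (f []) (f s) <= dY v (f []) + n)%nat).
  { apply gdist_le, (walkn_app _ _ _ _ _ _ (walkn_sym _ _ _ _ (simple_graph_sym _ Hsimple) (dY_walk _ _))).
    exact Hw. }
  pose proof (le_INR _ _ (length_le_dB_root s)). pose proof (dB_le_dY [] s).
  apply le_INR in Hfs, Hn. rewrite plus_INR in Hfs. nra.
Qed.

Lemma escape_lower_bound v N :
  5 / 8 <= 2 * deg nbrs v * energy_const v * (1 - hit_within nbrs v (S N) v).
Proof.
  set (SS := nodup (fun x y => excluded_middle_informative (x = y)) (ball nbrs v (S N))).
  set (w := reach_within nbrs v N).
  assert (HSS : NoDup SS) by apply NoDup_nodup.
  assert (Hball : forall x, In x (ball nbrs v (S N)) -> In x SS) by (intros; now apply nodup_In).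
  assert (Hout : forall x, ~ In x SS -> local_energy nbrs w x = 0).
  { apply (local_energy_out _ _ Hsimple _). intros x Hx. apply reach_within_in_ball in Hx; auto.
    split; [|intros y Hy]; apply Hball; [apply (ball_mono _ _ N)|eapply ball_step]; eauto. }
  destruct (INR_unbounded (C * (INR (dY v (f [])) + INR N + C))) as [K HK].
  assert (Hleaf : forall s, length s = K -> w (f s) = 0)
    by (intros s Hs; apply reach_within_far_leaf; rewrite Hs; lra).
  pose proof (value_le_energy w SS HSS Hout v K Hleaf) as Hval.
  unfold w at 1 in Hval. rewrite reach_within_eq in Hval.
  pose proof (energy_reach_within_le nbrs Hsimple v N SS HSS Hball) as Hener. fold w in Hener.
  pose proof (energy_const_nonneg v).
  assert (energy_const v * energy nbrs w SS <=
          energy_const v * (2 * deg nbrs v * (1 - hit_within nbrs v (S N) v)))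
    by (apply Rmult_le_compat_l; assumption).
  nra.
Qed.

End QuasiIsometricTree.

Theorem proposition5p3 (V : Type) (nbrs : V -> list V)
  (Hsimple : simple_graph nbrs) (Hconn : connected nbrs)
  (Hbdd : bounded_degree nbrs)
  (f : BVert -> V) (C : R) (HC : 0 < C)
  (Hqi : forall u v : BVert,
      / C * INR (dB u v) - C <= INR (gdist (adj_of nbrs) (f u) (f v)) /\
      INR (gdist (adj_of nbrs) (f u) (f v)) <= C * INR (dB u v) + C) :
  transient nbrs.
Proof.
  destruct Hbdd as [D HD].
  destruct (INR_unbounded (2 * C)) as [L HL].
  destruct (INR_unbounded (C * (2 * INR L + C))) as [R0 HR0].
  intros v. apply (return_prob_lt_1 nbrs v (5 / 8) (2 * deg nbrs v * energy_const nbrs f D L R0 v)).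
  - lra.
  - apply Rmult_le_pos; [apply Rmult_le_pos; [lra|apply pos_INR]|apply energy_const_nonneg].
  - intros N. apply (escape_lower_bound nbrs Hsimple Hconn f C HC Hqi D HD L ltac:(lra) R0 ltac:(lra)).
Qed.
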